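(* There exists a universal constant $K>0$ such that the following holds. Let $n\ge 1$, $\mu_0\in\mathbb R^n$, $\sigma_0>0$, $\epsilon\in(0,\sigma_0)$, and let $(\mu_1,\sigma_1)\in\mathbb R^n\times(0,\infty)$ satisfy $d((\mu_1,\sigma_1),(\mu_0,\sigma_0))\ge \epsilon$. Then there exists a measurable test $\varphi_n:\mathbb R^n\to\{0,1\}$ such that $$\mathbb E_{\mu_0,\sigma_0}\varphi_n\le e^{-Kn\epsilon^2/\sigma_0^2},\qquad \sup_{(\mu,\sigma)\in\mathbb R^n\times(0,\infty):\ d((\mu,\sigma),(\mu_1,\sigma_1))\le \epsilon/6}\mathbb E_{\mu,\sigma}(1-\varphi_n)\le e^{-Kn\epsilon^2/\sigma_0^2}.$$
   Context: For $\mu\in\mathbb R^n$ and $\sigma>0$, $P_{\mu,\sigma}$ denotes the Gaussian distribution $\mathrm N_n(\mu,\sigma^2 I_n)$ of the observation $y\in\mathbb R^n$ and $\mathbb E_{\mu,\sigma}$ the expectation under it. $\lVert\cdot\rVert_2$ is the Euclidean norm. The metric $d$ on $\mathbb R^n\times(0,\infty)$ is defined by $d^2((\mu_1,\sigma_1),(\mu_2,\sigma_2))=n^{-1}\lVert\mu_1-\mu_2\rVert_2^2+|\sigma_1-\sigma_2|^2$. The constant $K$ does not depend on $n,\epsilon,\mu_0,\sigma_0,\mu_1,\sigma_1$. *)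

From HB Require Import structures.
From mathcomp Require Import all_boot all_order all_algebra.
From mathcomp Require Import all_classical all_reals all_analysis.
Set Implicit Arguments. Unset Strict Implicit. Unset Printing Implicit Defensive.
Import Order.TTheory GRing.Theory Num.Theory.
Local Open Scope classical_set_scope.
Local Open Scope ring_scope.

(* Points of R^n are n-tuples (the library equips n.-tuple R with the
   product sigma-algebra of the Borel sigma-algebras). *)

(* Expectation of a (nonnegative) function phi of y ~ N_n(mu, sigma^2 I_n),
   as the iterated integral against the n independent one-dimensional
   normal laws N(mu_i, sigma^2) (normal_prob m s has standard deviation s).
   By Tonelli this is the integral w.r.t. the product measure. *)
Fixpoint gauss_expect {R : realType} (n : nat) :
  n.-tuple R -> R -> (n.-tuple R -> \bar R) -> \bar R :=
  match n return n.-tuple R -> R -> (n.-tuple R -> \bar R) -> \bar R with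
  | 0 => fun _ _ phi => phi [tuple]
  | m.+1 => fun mu sigma phi =>
      (\int[normal_prob (thead mu) sigma]_x
         gauss_expect [tuple of behead mu] sigma
           (fun t : m.-tuple R => phi [tuple of x :: t]))%E
  end.

Definition dist_ms {R : realType} (n : nat) (mu1 : n.-tuple R) (s1 : R)
  (mu2 : n.-tuple R) (s2 : R) : R :=
  Num.sqrt ((n%:R)^-1 * \sum_(i < n) (tnth mu1 i - tnth mu2 i) ^+ 2
            + (s1 - s2) ^+ 2).

(* Each test rejects when a quadratic statistic
   sum_i k (y_i - c_i)^2 + v_i (y_i - c_i) exceeds a threshold, so both error
   probabilities are bounded by Chernoff's method, using the closed form of the
   Gaussian moment generating function of a (X - c)^2 + b (X - c).
   If the scales are close, |sigma1 - sigma0| <= eps/2, the metric forces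
   ||mu1 - mu0||^2 >= 3 n eps^2 / 4 and the linear test
   <y - mu0, mu1 - mu0> > ||mu1 - mu0||^2 / 2 works.  Otherwise ||y - mu0||^2
   (resp. ||y - mu1||^2) compared with n sigma0^2 shifted by a multiple of
   eps sigma0 detects a larger (resp. smaller) scale, uniformly over the
   eps/6-ball around (mu1, sigma1).  Every exponent is a multiple of
   n (eps / sigma0)^2, which yields K = 1/1000. *)

From HB Require Import structures.
From mathcomp Require Import all_boot all_order all_algebra.
From mathcomp Require Import all_classical all_reals all_analysis.
From mathcomp Require Import measurable_realfun ring lra.
Import Order.TTheory GRing.Theory Num.Theory.
Local Open Scope classical_set_scope.
Local Open Scope ring_scope.

Section gaussian_mgf.
Context {R : realType}.
Local Notation leb := (@lebesgue_measure R).

Lemma integral_normal_prob (m s : R) (f : R -> R) :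
  (forall x, 0 <= f x) -> measurable_fun setT f ->
  (\int[normal_prob m s]_x (f x)%:E = \int[leb]_x (f x * normal_pdf m s x)%:E)%E.
Proof.
move=> f0 mf.
have ac : normal_prob m s `<< leb by exact: normal_prob_dominates.
have mEf : measurable_fun setT (fun x => (f x)%:E) by exact/measurable_EFinP.
rewrite -(Radon_Nikodym_SigmaFinite.change_of_variables ac) //.
apply: ae_eq_integral => //.
- apply: emeasurable_funM => //.
  exact: measurable_int (Radon_Nikodym_SigmaFinite.f_integrable _).
- by apply/measurable_EFinP; apply: measurable_funM => //; exact: measurable_normal_pdf.
- under [X in ae_eq _ _ _ X]eq_fun do rewrite EFinM.
  apply: ae_eqe_mul2l; apply: integral_ae_eq => //.
  + exact: Radon_Nikodym_SigmaFinite.f_integrable.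
  + by apply/measurable_EFinP; exact: measurable_normal_pdf.
  + by move=> E _ mE; rewrite -Radon_Nikodym_SigmaFinite.f_integral.
Qed.

Lemma integral_normal_fun (m s : R) : s != 0 ->
  (\int[leb]_x (normal_fun m s x)%:E = (normal_peak s)^-1%:E)%E.
Proof.
move=> s0; have := integral_normal_pdf m s; rewrite normal_pdfE //.
under eq_integral do rewrite EFinM.
rewrite ge0_integralZl_EFin //; last 3 first.
- by move=> x _; rewrite lee_fin normal_fun_ge0.
- by apply/measurable_EFinP; exact: measurable_normal_fun.
- exact: normal_peak_ge0.
have pk0 := normal_peak_gt0 s0.
case: (\int[leb]_x _)%E => [r| |] /=.
- rewrite -EFinM => -[h]; congr EFin.
  by apply: (@mulfI _ (normal_peak s)); rewrite ?h ?divff // gt_eqF.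
- by rewrite gt0_muley ?lte_fin.
- by rewrite gt0_muleNy ?lte_fin.
Qed.

Definition gauss_mgf (a b d s : R) : R :=
  (Num.sqrt (1 - 2 * a * s ^+ 2))^-1 *
  expR (((d + b * s ^+ 2) ^+ 2 / (1 - 2 * a * s ^+ 2) - d ^+ 2) / (2 * s ^+ 2)).

Lemma gauss_mgf_ge0 (a b d s : R) : 0 <= gauss_mgf a b d s.
Proof. by rewrite mulr_ge0 ?expR_ge0 // invr_ge0 sqrtr_ge0. Qed.

Lemma normal_prob_expR_quad (m s c a b : R) : 0 < s -> 0 < 1 - 2 * a * s ^+ 2 ->
  (\int[normal_prob m s]_x (expR (a * (x - c) ^+ 2 + b * (x - c)))%:E
    = (gauss_mgf a b (m - c) s)%:E)%E.
Proof.
move=> s0 r0; set r := 1 - 2 * a * s ^+ 2; set d := m - c.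
rewrite integral_normal_prob; last 2 first.
- by move=> x; exact: expR_ge0.
- apply: measurableT_comp => //; apply: measurable_funD => //.
  + by apply: measurable_funM => //; apply: measurable_funX; exact: measurable_funB.
  + by apply: measurable_funM => //; exact: measurable_funB.
rewrite normal_pdfE ?gt_eqF //.
set E := expR (((d + b * s ^+ 2) ^+ 2 / r - d ^+ 2) / (2 * s ^+ 2)).
set s' := s / Num.sqrt r.
have sr0 : 0 < Num.sqrt r by rewrite sqrtr_gt0.
have s'0 : s' != 0 by rewrite gt_eqF // divr_gt0.
have s'2 : s' ^+ 2 = s ^+ 2 / r by rewrite expr_div_n sqr_sqrtr // ltW.
(* completing the square: the integrand is a multiple of the N(m', s'^2) density *)
transitivity (\int[leb]_x ((normal_peak s * E)%:E *
                           (normal_fun (c + (d + b * s ^+ 2) / r) s' x)%:E))%E.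
  apply: eq_integral => x _; rewrite -EFinM; congr EFin.
  rewrite /normal_fun /E mulrCA -expRD -mulrA -expRD s'2; congr (_ * expR _).
  by rewrite /d /r; field; rewrite -/r gt_eqF ?gt_eqF.
rewrite ge0_integralZl_EFin //; last 3 first.
- by move=> x _; rewrite lee_fin normal_fun_ge0.
- by apply/measurable_EFinP; exact: measurable_normal_fun.
- by rewrite mulr_ge0 ?normal_peak_ge0 ?expR_ge0.
rewrite integral_normal_fun // -EFinM; congr EFin.
rewrite /gauss_mgf -/r -/E mulrC mulrA; congr (_ * _).
have spi : 0 < s ^+ 2 * pi *+ 2 by rewrite mulrn_wgt0 // mulr_gt0 ?pi_gt0 ?exprn_gt0.
rewrite /normal_peak invrK s'2.
rewrite (_ : s ^+ 2 / r * pi *+ 2 = s ^+ 2 * pi *+ 2 / r); last by rewrite mulrAC mulrnAl.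
by rewrite sqrtrM ?ltW // sqrtrV ?ltW // mulrAC divff ?mul1r // gt_eqF // sqrtr_gt0.
Qed.

Lemma invsqrt_le_expR (r : R) : 0 < r -> (Num.sqrt r)^-1 <= expR ((1 - r) / (2 * r)).
Proof.
move=> r0.
have inv_le : r^-1 <= expR ((1 - r) / r).
  apply: le_trans (expR_ge1Dx _); rewrite le_eqVlt; apply/orP; left; apply/eqP.
  by field; rewrite gt_eqF.
have -> : expR ((1 - r) / (2 * r)) = Num.sqrt (expR ((1 - r) / r)).
  have -> : expR ((1 - r) / r) = expR ((1 - r) / (2 * r)) ^+ 2.
    by rewrite -expRM_natr; congr expR; field; rewrite gt_eqF.
  by rewrite sqrtr_sqr ger0_norm ?expR_ge0.
by rewrite -(sqrtrV (ltW r0)) ler_sqrt // expR_gt0.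
Qed.

Lemma gauss_mgf_quad_le (a d s : R) : 0 < s -> 0 < 1 - 2 * a * s ^+ 2 ->
  gauss_mgf a 0 d s <=
  expR (a * s ^+ 2 / (1 - 2 * a * s ^+ 2) + a * d ^+ 2 / (1 - 2 * a * s ^+ 2)).
Proof.
move=> s0 r0; rewrite /gauss_mgf expRD.
apply: ler_pM; [by rewrite invr_ge0 sqrtr_ge0 | exact: expR_ge0 | |].
- apply: le_trans (invsqrt_le_expR _ r0) _; rewrite ler_expR le_eqVlt; apply/orP; left.
  by apply/eqP; field; rewrite gt_eqF.
- rewrite ler_expR mul0r addr0 le_eqVlt; apply/orP; left.
  by apply/eqP; field; rewrite !gt_eqF // exprn_gt0.
Qed.

Lemma gauss_mgf_lin (b d s : R) : 0 < s ->
  gauss_mgf 0 b d s = expR (b * d + b ^+ 2 * s ^+ 2 / 2).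
Proof.
move=> s0; rewrite /gauss_mgf !mulr0 mul0r subr0 sqrtr1 invr1 mul1r.
by congr expR; field; rewrite gt_eqF.
Qed.

End gaussian_mgf.

(* Monotonicity needs no measurability: the integral of a nonnegative function
   is the supremum of the integrals of its simple minorants. *)
Lemma ge0_le_integralT {R : realType} d (T : measurableType d)
    (mu : {measure set T -> \bar R}) (f g : T -> \bar R) :
  (forall x, (0 <= f x)%E) -> (forall x, (f x <= g x)%E) ->
  (\int[mu]_x f x <= \int[mu]_x g x)%E.
Proof.
move=> f0 fg; have g0 x : (0 <= g x)%E by exact: le_trans (f0 x) (fg x).
rewrite !ge0_integralTE //; apply: ereal_sup_le => _ [h hf <-].
by exists h => // x; exact: le_trans (hf x) (fg x).
Qed.

Section gauss_expect.
Context {R : realType}.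

Lemma gauss_expect_ge0 n (mu : n.-tuple R) s (phi : n.-tuple R -> \bar R) :
  (forall y, (0 <= phi y)%E) -> (0 <= gauss_expect mu s phi)%E.
Proof.
elim: n mu phi => [|n IH] mu phi phi0 /=; first exact: phi0.
by apply: integral_ge0 => x _; exact: IH.
Qed.

Lemma gauss_expect_le n (mu : n.-tuple R) s (phi psi : n.-tuple R -> \bar R) :
  (forall y, (0 <= phi y)%E) -> (forall y, (phi y <= psi y)%E) ->
  (gauss_expect mu s phi <= gauss_expect mu s psi)%E.
Proof.
elim: n mu phi psi => [|n IH] mu phi psi phi0 le_phi /=; first exact: le_phi.
apply: ge0_le_integralT => x; first exact: gauss_expect_ge0.
exact: IH.
Qed.

(* The factors are indexed by nat so that the induction can shift them. *)
Lemma gauss_expect_prod n (mu : n.-tuple R) s (f : nat -> R -> R) (c : nat -> R) (k : R) :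
  0 <= k -> (forall i x, 0 <= f i x) -> (forall i, measurable_fun setT (f i)) ->
  (forall i : 'I_n, \int[normal_prob (tnth mu i) s]_x (f i x)%:E = (c i)%:E)%E ->
  gauss_expect mu s (fun y => (k * \prod_(i < n) f i (tnth y i))%:E)
    = (k * \prod_(i < n) c i)%:E.
Proof.
elim: n mu f c k => [|n IH] mu f c k k0 f0 mf fc /=; first by rewrite !big_ord0.
have c_ge0 (i : 'I_n) : 0 <= c i.+1.
  rewrite -lee_fin; have /= <- := fc (lift ord0 i).
  by apply: integral_ge0 => x _; rewrite lee_fin.
transitivity (\int[normal_prob (thead mu) s]_x
                ((k * \prod_(i < n) c i.+1)%:E * (f 0%N x)%:E))%E.
  apply: eq_integral => x _.
  under [X in gauss_expect _ _ X = _]eq_fun => t.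
    rewrite big_ord_recl; under eq_bigr => i _ do rewrite tnthS.
    rewrite [tnth _ ord0]/= mulrA.
    over.
  rewrite /= (IH _ (fun i => f i.+1) (fun i => c i.+1) (k * f 0%N x)) //.
  - by rewrite -EFinM; congr EFin; ring.
  - by rewrite mulr_ge0.
  - move=> i; rewrite tnth_behead.
    by have := fc (inord i.+1); rewrite inordK // ltnS.
have f0_ge0 x : [set: R] x -> (0 <= (f 0%N x)%:E)%E by rewrite lee_fin.
have mf0 : measurable_fun [set: R] (fun x => (f 0%N x)%:E) by exact/measurable_EFinP.
have Ck_ge0 : 0 <= k * \prod_(i < n) c i.+1 by rewrite mulr_ge0 // prodr_ge0.
rewrite (@ge0_integralZl_EFin _ _ _ (normal_prob (thead mu) s) _ measurableT _ f0_ge0 mf0 _ Ck_ge0).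
by rewrite (fc ord0) -EFinM big_ord_recl; congr EFin; ring.
Qed.

End gauss_expect.

Section quadratic_test.
Context {R : realType} {n : nat}.
Implicit Types (mu c v : n.-tuple R) (y : n.-tuple R).

Definition quad_stat (k : R) v c y : R :=
  \sum_(i < n) (k * (tnth y i - tnth c i) ^+ 2 + tnth v i * (tnth y i - tnth c i)).

Definition quad_test (k : R) v c (T : R) y : R :=
  if T < quad_stat k v c y then 1 else 0.

Lemma measurable_quad_test k v c T : measurable_fun setT (quad_test k v c T).
Proof.
apply: measurable_fun_ifT => //; apply: measurable_fun_ltr => //.
apply: measurable_sum => i; apply: measurable_funD.
- apply: measurable_funM => //; apply: measurable_funX; apply: measurable_funB => //.
  exact: measurable_tnth.
- by apply: measurable_funM => //; apply: measurable_funB => //; exact: measurable_tnth.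
Qed.

Lemma quad_test01 k v c T y : quad_test k v c T y = 0 \/ quad_test k v c T y = 1.
Proof. by rewrite /quad_test; case: ifP; [right|left]. Qed.

Lemma gauss_expect_chernoff mu c v s k l T (q : 'I_n -> R) (phi : n.-tuple R -> R) :
  0 < s -> 0 < 1 - 2 * (l * k) * s ^+ 2 ->
  (forall y, 0 <= phi y) -> (forall y, phi y <= expR (l * quad_stat k v c y - T)) ->
  (forall i, gauss_mgf (l * k) (l * tnth v i) (tnth mu i - tnth c i) s <= expR (q i)) ->
  (gauss_expect mu s (fun y => (phi y)%:E) <= (expR (- T + \sum_(i < n) q i))%:E)%E.
Proof.
move=> s0 r0 phi0 phi_le mgf_le.
pose f i x := expR (l * k * (x - nth 0 c i) ^+ 2 + l * nth 0 v i * (x - nth 0 c i)).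
apply: (@le_trans _ _ (gauss_expect mu s
   (fun y => (expR (- T) * \prod_(i < n) f i (tnth y i))%:E))).
  apply: gauss_expect_le => y; rewrite lee_fin //.
  rewrite (le_trans (phi_le y)) // le_eqVlt; apply/orP; left; apply/eqP.
  rewrite addrC expRD; congr (_ * _).
  rewrite /quad_stat mulr_sumr expR_sum; apply: eq_bigr => i _.
  by rewrite /f !(tnth_nth 0); congr expR; ring.
rewrite (@gauss_expect_prod _ n mu s f
  (fun i => gauss_mgf (l * k) (l * nth 0 v i) (nth 0 mu i - nth 0 c i) s)).
- rewrite lee_fin expRD expR_sum ler_wpM2l ?expR_ge0 //.
  apply: ler_prod => i _; rewrite gauss_mgf_ge0 /= -!(tnth_nth 0).
  exact: mgf_le.
- exact: expR_ge0.
- by move=> i x; exact: expR_ge0.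
- move=> i; apply: measurableT_comp => //; apply: measurable_funD => //.
  + by apply: measurable_funM => //; apply: measurable_funX; exact: measurable_funB.
  + by apply: measurable_funM => //; exact: measurable_funB.
- by move=> i; rewrite normal_prob_expR_quad // (tnth_nth 0).
Qed.

Lemma quad_test_chernoff mu c v s k l T (q : 'I_n -> R) :
  0 < s -> 0 <= l -> 0 < 1 - 2 * (l * k) * s ^+ 2 ->
  (forall i, gauss_mgf (l * k) (l * tnth v i) (tnth mu i - tnth c i) s <= expR (q i)) ->
  (gauss_expect mu s (fun y => (quad_test k v c T y)%:E)
     <= (expR (- (l * T) + \sum_(i < n) q i))%:E)%E.
Proof.
move=> s0 l0 r0; apply: gauss_expect_chernoff => // y; rewrite /quad_test.
  by case: ifP.
case: ifP => [lt_T|_]; last exact: expR_ge0.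
apply: le_trans (expR_ge1Dx _); rewrite lerDl -mulrBr mulr_ge0 // subr_ge0.
exact: ltW.
Qed.

Lemma quad_testC_chernoff mu c v s k l T (q : 'I_n -> R) :
  0 < s -> 0 <= l -> 0 < 1 - 2 * (- l * k) * s ^+ 2 ->
  (forall i, gauss_mgf (- l * k) (- l * tnth v i) (tnth mu i - tnth c i) s <= expR (q i)) ->
  (gauss_expect mu s (fun y => (1 - quad_test k v c T y)%:E)
     <= (expR (l * T + \sum_(i < n) q i))%:E)%E.
Proof.
move=> s0 l0 r0 mgf_le; rewrite -[l * T]opprK -mulNr.
apply: (@gauss_expect_chernoff mu c v s k (- l)) => // y; rewrite /quad_test.
  by case: ifP; rewrite ?subrr ?subr0.
case: ifP => [_|le_T]; first by rewrite subrr expR_ge0.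
apply: le_trans (expR_ge1Dx _); rewrite subr0 lerDl.
rewrite (_ : _ - _ = l * (T - quad_stat k v c y)); last by ring.
by rewrite mulr_ge0 // subr_ge0 leNgt le_T.
Qed.

End quadratic_test.

Lemma div1B2_le {R : realFieldType} (y : R) : 0 <= y -> y <= 1/4 ->
  y / (1 - 2 * y) <= y + 4 * y ^+ 2.
Proof. by move=> y0 y1; rewrite ler_pdivrMr; nra. Qed.

Lemma div1D2_ge {R : realFieldType} (y : R) : 0 <= y -> y - 2 * y ^+ 2 <= y / (1 + 2 * y).
Proof. by move=> y0; rewrite ler_pdivlMr; nra. Qed.

Section tests.
Context {R : realType} {n : nat}.

Local Notation sqdist mu1 mu0 := (\sum_(i < n) (tnth mu1 i - tnth mu0 i) ^+ 2).
Local Notation err_bound a s := (expR (- (1/1000 * n%:R * a ^+ 2 / s ^+ 2)))%:E.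

Lemma dist_ms_sqr (mu1 mu0 : n.-tuple R) (t s : R) :
  dist_ms mu1 t mu0 s ^+ 2 = n%:R^-1 * sqdist mu1 mu0 + (t - s) ^+ 2.
Proof.
rewrite sqr_sqrtr // addr_ge0 ?sqr_ge0 // mulr_ge0 ?invr_ge0 // sumr_ge0 // => i _.
exact: sqr_ge0.
Qed.

Lemma dist_ms_ge {mu1 mu0 : n.-tuple R} {t s a : R} : 0 <= a ->
  a <= dist_ms mu1 t mu0 s -> a ^+ 2 <= n%:R^-1 * sqdist mu1 mu0 + (t - s) ^+ 2.
Proof. by move=> a0 le_a; rewrite -dist_ms_sqr ler_sqr ?nnegrE ?sqrtr_ge0. Qed.

Lemma dist_ms_le {mu mu1 : n.-tuple R} {sig t b : R} : (0 < n)%N ->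
  dist_ms mu sig mu1 t <= b -> sqdist mu mu1 <= n%:R * b ^+ 2 /\ `|sig - t| <= b.
Proof.
move=> n0 le_b; have b0 : 0 <= b := le_trans (sqrtr_ge0 _) le_b.
have W0 : 0 <= sqdist mu mu1 by rewrite sumr_ge0 // => i _; rewrite sqr_ge0.
move: le_b; rewrite -ler_sqr ?nnegrE ?sqrtr_ge0 // dist_ms_sqr => le_b2; split.
  rewrite -ler_pdivrMl ?ltr0n //; apply: le_trans le_b2.
  by rewrite lerDl sqr_ge0.
rewrite -ler_sqr ?nnegrE // real_normK ?num_real //; apply: le_trans le_b2.
by rewrite lerDr mulr_ge0 ?invr_ge0.
Qed.

Definition mean_test (mu0 mu1 : n.-tuple R) : n.-tuple R -> R :=
  quad_test 0 [tuple tnth mu1 i - tnth mu0 i | i < n] mu0 (sqdist mu1 mu0 / 2).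

Lemma mean_test_null (mu0 mu1 : n.-tuple R) (s a : R) : 0 < s ->
  3/4 * n%:R * a ^+ 2 <= sqdist mu1 mu0 ->
  (gauss_expect mu0 s (fun y => (mean_test mu0 mu1 y)%:E) <= err_bound a s)%E.
Proof.
move=> s0 sep; set V := sqdist mu1 mu0 in sep *.
set u := (s ^+ 2)^-1; pose l := u / 2.
have u0 : 0 < u by rewrite invr_gt0 exprn_gt0.
apply: le_trans (quad_test_chernoff _ _ _ _ _ l (V / 2)
  (fun i => (l * (tnth mu1 i - tnth mu0 i)) ^+ 2 * s ^+ 2 / 2) s0 _ _ _) _.
- by rewrite divr_ge0 // ltW.
- by rewrite mulr0 mulr0 mul0r subr0 ltr01.
- by move=> i; rewrite mulr0 subrr gauss_mgf_lin // tnth_mktuple mulr0 add0r.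
rewrite lee_fin ler_expR.
have -> : \sum_(i < n) (l * (tnth mu1 i - tnth mu0 i)) ^+ 2 * s ^+ 2 / 2
          = l ^+ 2 * s ^+ 2 / 2 * V.
  by rewrite /V mulr_sumr; apply: eq_bigr => i _; ring.
have -> : 1/1000 * n%:R * a ^+ 2 / s ^+ 2 = 1/1000 * (u * (n%:R * a ^+ 2)) by rewrite /u; ring.
have -> : l ^+ 2 * s ^+ 2 / 2 * V = u * V / 8 by rewrite /l /u; field; rewrite gt_eqF.
have : 0 <= u * (V - 3/4 * n%:R * a ^+ 2) by rewrite mulr_ge0 ?subr_ge0 // ltW.
have : 0 <= u * (n%:R * a ^+ 2) by rewrite mulr_ge0 ?(ltW u0) // mulr_ge0 ?sqr_ge0.
rewrite /l; lra.
Qed.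

Lemma mean_test_alt (mu0 mu1 mu : n.-tuple R) (s a sig : R) :
  0 < s -> 0 < sig -> sig ^+ 2 <= 4 * s ^+ 2 ->
  3/4 * n%:R * a ^+ 2 <= sqdist mu1 mu0 -> sqdist mu mu1 <= n%:R * (a / 6) ^+ 2 ->
  (gauss_expect mu sig (fun y => (1 - mean_test mu0 mu1 y)%:E) <= err_bound a s)%E.
Proof.
move=> s0 sig0 sig_le sep close.
set V := sqdist mu1 mu0 in sep *; set W := sqdist mu mu1 in close.
set u := (s ^+ 2)^-1; pose l := u / 20.
have u0 : 0 < u by rewrite invr_gt0 exprn_gt0.
pose v i := tnth mu1 i - tnth mu0 i; pose w i := tnth mu i - tnth mu1 i.
apply: le_trans (quad_testC_chernoff _ _ _ _ _ l (V / 2)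
  (fun i => l * w i ^+ 2 + (l ^+ 2 * sig ^+ 2 / 2 - 3/4 * l) * v i ^+ 2) sig0 _ _ _) _.
- by rewrite divr_ge0 // ltW.
- by rewrite mulr0 mulr0 mul0r subr0 ltr01.
- move=> i; rewrite mulr0 gauss_mgf_lin // ler_expR tnth_mktuple.
  have -> : tnth mu i - tnth mu0 i = w i + v i by rewrite /v /w; ring.
  have : 0 <= l * (v i / 2 + w i) ^+ 2 by rewrite mulr_ge0 ?sqr_ge0 // divr_ge0 // ltW.
  rewrite -/(v i); nra.
rewrite lee_fin ler_expR big_split /= -!mulr_sumr.
rewrite (_ : \sum_(i < n) w i ^+ 2 = W) // (_ : \sum_(i < n) v i ^+ 2 = V) //.
have -> : 1/1000 * n%:R * a ^+ 2 / s ^+ 2 = 1/1000 * (u * (n%:R * a ^+ 2)) by rewrite /u; ring.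
have usig : u ^+ 2 * sig ^+ 2 <= 4 * u.
  have -> : 4 * u = u ^+ 2 * (4 * s ^+ 2) by rewrite /u; field; rewrite gt_eqF.
  by rewrite ler_wpM2l ?sqr_ge0.
have : 0 <= (4 * u - u ^+ 2 * sig ^+ 2) * V by rewrite mulr_ge0 ?subr_ge0 // sumr_ge0 // => i _; rewrite sqr_ge0.
have : 0 <= u * (V - 3/4 * n%:R * a ^+ 2) by rewrite mulr_ge0 ?subr_ge0 // ltW.
have : 0 <= u * (n%:R * (a / 6) ^+ 2 - W) by rewrite mulr_ge0 ?subr_ge0 // ltW.
have : 0 <= u * (n%:R * a ^+ 2) by rewrite mulr_ge0 ?(ltW u0) // mulr_ge0 ?sqr_ge0.
rewrite /l; lra.
Qed.

Definition scale_up_test (mu0 : n.-tuple R) (s a : R) : n.-tuple R -> R :=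
  quad_test 1 [tuple 0 | _ < n] mu0 (n%:R * (s ^+ 2 + a * s / 3)).

Lemma scale_up_test_null (mu0 : n.-tuple R) (s a : R) : 0 < s -> 0 < a -> a < s ->
  (gauss_expect mu0 s (fun y => (scale_up_test mu0 s a y)%:E) <= err_bound a s)%E.
Proof.
move=> s0 a0 a_lt_s; set x := a / s.
have x0 : 0 < x by rewrite divr_gt0.
have x1 : x < 1 by rewrite ltr_pdivrMr // mul1r.
have sn0 : s != 0 by rewrite gt_eqF.
pose l := x / (24 * s ^+ 2).
have lr : l * s ^+ 2 / (1 - 2 * l * s ^+ 2) = x / 24 / (1 - 2 * (x / 24)).
  by rewrite /l; field; rewrite sn0 /=; lra.
have r0 : 0 < 1 - 2 * l * s ^+ 2.
  by rewrite (_ : 2 * l * s ^+ 2 = x / 12); [lra | rewrite /l; field].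
apply: le_trans (quad_test_chernoff _ _ _ _ _ l _
  (fun _ => l * s ^+ 2 / (1 - 2 * l * s ^+ 2)) s0 _ _ _) _.
- by rewrite divr_ge0 ?(ltW x0) // mulr_ge0 ?sqr_ge0.
- by rewrite mulr1.
- move=> i; rewrite tnth_mktuple mulr0 subrr mulr1.
  apply: le_trans (gauss_mgf_quad_le _ _ _ s0 r0) _.
  by rewrite ler_expR expr0n mulr0 mul0r addr0.
rewrite lee_fin ler_expR sumr_const card_ord lr -[x / 24 / _ *+ n]mulr_natl.
have -> : l * (n%:R * (s ^+ 2 + a * s / 3)) = n%:R * (x / 24 + x ^+ 2 / 72).
  by rewrite /l /x; field.
have -> : 1/1000 * n%:R * a ^+ 2 / s ^+ 2 = n%:R * (x ^+ 2 / 1000) by rewrite /x; field.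
have q : x / 24 / (1 - 2 * (x / 24)) <= x / 24 + 4 * (x / 24) ^+ 2.
  by apply: div1B2_le; lra.
have := ler_wpM2l (ler0n _ n) q.
have : 0 <= n%:R * x ^+ 2 by rewrite mulr_ge0 ?sqr_ge0.
lra.
Qed.

Lemma scale_up_test_alt (mu0 mu : n.-tuple R) (s a sig : R) :
  0 < s -> 0 < a -> a < s -> s + a / 3 <= sig ->
  (gauss_expect mu sig (fun y => (1 - scale_up_test mu0 s a y)%:E) <= err_bound a s)%E.
Proof.
move=> s0 a0 a_lt_s sig_ge; set x := a / s.
have x0 : 0 < x by rewrite divr_gt0.
have x1 : x < 1 by rewrite ltr_pdivrMr // mul1r.
have sn0 : s != 0 by rewrite gt_eqF.
have sig0 : 0 < sig by lra.
have sig_ge_x : s * (1 + x / 3) <= sig.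
  by rewrite (_ : s * (1 + x / 3) = s + a / 3) // /x; field.
pose l := x / (20 * sig ^+ 2).
have l0 : 0 <= l by rewrite divr_ge0 ?(ltW x0) // mulr_ge0 ?sqr_ge0.
have lr : - l * sig ^+ 2 / (1 - 2 * - l * sig ^+ 2) = - (x / 20 / (1 + 2 * (x / 20))).
  by rewrite /l; field; rewrite gt_eqF //=; lra.
have r0 : 0 < 1 - 2 * - l * sig ^+ 2.
  by rewrite (_ : 2 * - l * sig ^+ 2 = - (x / 10)); [lra | rewrite /l; field; rewrite gt_eqF].
apply: le_trans (quad_testC_chernoff _ _ _ _ _ l _
  (fun _ => - l * sig ^+ 2 / (1 - 2 * - l * sig ^+ 2)) sig0 l0 _ _) _.
- by rewrite mulr1.
- move=> i; rewrite tnth_mktuple mulr0 mulr1.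
  apply: le_trans (gauss_mgf_quad_le _ _ _ sig0 r0) _.
  rewrite ler_expR gerDl !mulNr oppr_le0.
  by apply: divr_ge0; [rewrite mulr_ge0 ?sqr_ge0 | exact: ltW].
rewrite lee_fin ler_expR sumr_const card_ord lr -[- _ *+ n]mulr_natl.
set P := s ^+ 2 * (1 + x / 3) / sig ^+ 2.
have -> : l * (n%:R * (s ^+ 2 + a * s / 3)) = n%:R * x / 20 * P.
  by rewrite /l /P /x; field; rewrite !gt_eqF.
have hP : P <= 1 - x / 5.
  rewrite ler_pdivrMr ?exprn_gt0 //.
  have : (s * (1 + x / 3)) ^+ 2 <= sig ^+ 2.
    by rewrite ler_sqr ?nnegrE ?(ltW sig0) // mulr_ge0 ?(ltW s0) //; lra.
  have : 0 <= s ^+ 2 * (1 + x / 3) * (x * (2 - x)).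
    by apply: mulr_ge0; apply: mulr_ge0; rewrite ?sqr_ge0 //; lra.
  move=> h1 h2; have : 0 <= (1 - x / 5) * (sig ^+ 2 - (s * (1 + x / 3)) ^+ 2).
    by rewrite mulr_ge0 ?subr_ge0 //; lra.
  lra.
have -> : 1/1000 * n%:R * a ^+ 2 / s ^+ 2 = n%:R * (x ^+ 2 / 1000) by rewrite /x; field.
have q : x / 20 - 2 * (x / 20) ^+ 2 <= x / 20 / (1 + 2 * (x / 20)).
  by apply: div1D2_ge; lra.
have := ler_wpM2l (ler0n _ n) q.
have : 0 <= (1 - x / 5 - P) * (n%:R * x) by rewrite mulr_ge0 ?subr_ge0 // mulr_ge0 // ltW.
have : 0 <= n%:R * x ^+ 2 by rewrite mulr_ge0 ?sqr_ge0.
lra.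
Qed.

(* With k = -1 this rejects when ||y - mu1||^2 < n (s^2 - a s / 4). *)
Definition scale_down_test (mu1 : n.-tuple R) (s a : R) : n.-tuple R -> R :=
  quad_test (-1) [tuple 0 | _ < n] mu1 (- (n%:R * (s ^+ 2 - a * s / 4))).

Lemma scale_down_test_null (mu0 mu1 : n.-tuple R) (s a : R) : 0 < s -> 0 < a -> a < s ->
  (gauss_expect mu0 s (fun y => (scale_down_test mu1 s a y)%:E) <= err_bound a s)%E.
Proof.
move=> s0 a0 a_lt_s; set x := a / s.
have x0 : 0 < x by rewrite divr_gt0.
have x1 : x < 1 by rewrite ltr_pdivrMr // mul1r.
have sn0 : s != 0 by rewrite gt_eqF.
pose l := x / (16 * s ^+ 2).
have l0 : 0 <= l by rewrite divr_ge0 ?(ltW x0) // mulr_ge0 ?sqr_ge0.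
have lr : - l * s ^+ 2 / (1 - 2 * - l * s ^+ 2) = - (x / 16 / (1 + 2 * (x / 16))).
  by rewrite /l; field; rewrite sn0 /=; lra.
have r0 : 0 < 1 - 2 * - l * s ^+ 2.
  by rewrite (_ : 2 * - l * s ^+ 2 = - (x / 8)); [lra | rewrite /l; field].
apply: le_trans (quad_test_chernoff _ _ _ _ _ l _
  (fun _ => - l * s ^+ 2 / (1 - 2 * - l * s ^+ 2)) s0 l0 _ _) _.
- by rewrite mulrN1.
- move=> i; rewrite tnth_mktuple mulr0 mulrN1.
  apply: le_trans (gauss_mgf_quad_le _ _ _ s0 r0) _.
  rewrite ler_expR gerDl !mulNr oppr_le0.
  by apply: divr_ge0; [rewrite mulr_ge0 ?sqr_ge0 | exact: ltW].
rewrite lee_fin ler_expR sumr_const card_ord lr -[- _ *+ n]mulr_natl.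
have -> : - (l * - (n%:R * (s ^+ 2 - a * s / 4))) = n%:R * (x / 16 - x ^+ 2 / 64).
  by rewrite /l /x; field.
have -> : 1/1000 * n%:R * a ^+ 2 / s ^+ 2 = n%:R * (x ^+ 2 / 1000) by rewrite /x; field.
have q : x / 16 - 2 * (x / 16) ^+ 2 <= x / 16 / (1 + 2 * (x / 16)).
  by apply: div1D2_ge; lra.
have := ler_wpM2l (ler0n _ n) q.
have : 0 <= n%:R * x ^+ 2 by rewrite mulr_ge0 ?sqr_ge0.
lra.
Qed.

Lemma scale_down_test_alt (mu1 mu : n.-tuple R) (s a sig : R) :
  0 < s -> 0 < a -> a < s -> 0 < sig -> sig <= s - a / 3 ->
  sqdist mu mu1 <= n%:R * (a / 6) ^+ 2 ->
  (gauss_expect mu sig (fun y => (1 - scale_down_test mu1 s a y)%:E) <= err_bound a s)%E.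
Proof.
move=> s0 a0 a_lt_s sig0 sig_le close; set W := sqdist mu mu1 in close.
set x := a / s.
have x0 : 0 < x by rewrite divr_gt0.
have x1 : x < 1 by rewrite ltr_pdivrMr // mul1r.
have sn0 : s != 0 by rewrite gt_eqF.
have sig_le_x : sig <= s * (1 - x / 3).
  by rewrite (_ : s * (1 - x / 3) = s - a / 3) // /x; field.
pose l := x / (32 * s ^+ 2).
have l0 : 0 <= l by rewrite divr_ge0 ?(ltW x0) // mulr_ge0 ?sqr_ge0.
set P := l * sig ^+ 2.
have P0 : 0 <= P by rewrite mulr_ge0 ?sqr_ge0.
have P_le : P <= x / 32 * (1 - x / 3) ^+ 2.
  have -> : x / 32 * (1 - x / 3) ^+ 2 = l * (s * (1 - x / 3)) ^+ 2 by rewrite /l; field.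
  rewrite ler_wpM2l // ler_sqr ?nnegrE ?(ltW sig0) // mulr_ge0 ?(ltW s0) //; lra.
have P_le' : P <= x / 32.
  have : 0 <= x ^+ 2 * (6 - x) by rewrite mulr_ge0 ?sqr_ge0 //; lra.
  lra.
have rP : 1 - 2 * l * sig ^+ 2 = 1 - 2 * P by rewrite /P mulrA.
have r0 : 0 < 1 - 2 * l * sig ^+ 2 by rewrite rP; lra.
apply: le_trans (quad_testC_chernoff _ _ _ _ _ l _
  (fun i => P / (1 - 2 * P) + l / (1 - 2 * P) * (tnth mu i - tnth mu1 i) ^+ 2)
  sig0 l0 _ _) _.
- by rewrite mulrN1 opprK.
- move=> i; rewrite tnth_mktuple mulr0 mulrN1 opprK.
  apply: le_trans (gauss_mgf_quad_le _ _ _ sig0 r0) _.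
  by rewrite rP (mulrAC l ((tnth mu i - tnth mu1 i) ^+ 2)) -/P.
rewrite lee_fin ler_expR big_split /= sumr_const card_ord -mulr_sumr -/W.
rewrite -[P / _ *+ n]mulr_natl.
have -> : l * - (n%:R * (s ^+ 2 - a * s / 4)) = - (n%:R * (x / 32 - x ^+ 2 / 128)).
  by rewrite /l /x; field.
have -> : 1/1000 * n%:R * a ^+ 2 / s ^+ 2 = n%:R * (x ^+ 2 / 1000) by rewrite /x; field.
have hP : P / (1 - 2 * P) <= P + 4 * P ^+ 2 by apply: div1B2_le; lra.
have hW : l / (1 - 2 * P) * W <= 16 / 15 * (n%:R * x ^+ 3 / 1152).
  have lW : l * W <= n%:R * x ^+ 3 / 1152.
    have -> : n%:R * x ^+ 3 / 1152 = l * (n%:R * (a / 6) ^+ 2) by rewrite /l /x; field.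
    exact: ler_wpM2l.
  have r_inv : (1 - 2 * P)^-1 <= 16 / 15.
    by rewrite (_ : 16 / 15 = (15 / 16)^-1) ?lef_pV2 ?posrE; [lra | lra | lra | field].
  rewrite mulrAC [X in _ <= X]mulrC; apply: ler_pM => //.
  - by rewrite mulr_ge0 // sumr_ge0 // => i _; rewrite sqr_ge0.
  - by rewrite invr_ge0; lra.
have := ler_wpM2l (ler0n _ n) hP.
have : n%:R * P <= n%:R * (x / 32 * (1 - x / 3) ^+ 2) by rewrite ler_wpM2l.
have : n%:R * P ^+ 2 <= n%:R * (x / 32) ^+ 2 by rewrite ler_wpM2l // ler_sqr ?nnegrE //; lra.
have : n%:R * x ^+ 3 <= n%:R * x ^+ 2.
  by rewrite ler_wpM2l // exprSr ger_pMr ?exprn_gt0 // ltW.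
have : 0 <= n%:R * x ^+ 2 by rewrite mulr_ge0 ?sqr_ge0.
lra.
Qed.

Definition separating_test (K : R) (mu0 : n.-tuple R) (s a : R) (mu1 : n.-tuple R) (t : R)
    (phi : n.-tuple R -> R) : Prop :=
  (gauss_expect mu0 s (fun y => (phi y)%:E)
     <= (expR (- (K * n%:R * a ^+ 2 / s ^+ 2)))%:E)%E /\
  (forall (mu : n.-tuple R) (sigma : R), 0 < sigma -> dist_ms mu sigma mu1 t <= a / 6 ->
     (gauss_expect mu sigma (fun y => (1 - phi y)%:E)
        <= (expR (- (K * n%:R * a ^+ 2 / s ^+ 2)))%:E)%E).

Lemma separating_mean_test (mu0 mu1 : n.-tuple R) (s a t : R) :
  (0 < n)%N -> 0 < s -> 0 < a -> a < s -> a <= dist_ms mu1 t mu0 s -> `|t - s| <= a / 2 ->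
  separating_test (1/1000) mu0 s a mu1 t (mean_test mu0 mu1).
Proof.
move=> n0 s0 a0 a_lt_s far near_ts; move: near_ts; rewrite ler_norml => /andP[ts1 ts2].
have sep : 3/4 * n%:R * a ^+ 2 <= sqdist mu1 mu0.
  have n_gt0 : 0 < n%:R :> R by rewrite ltr0n.
  have : 3/4 * a ^+ 2 <= n%:R^-1 * sqdist mu1 mu0.
    have := dist_ms_ge (ltW a0) far; nra.
  by move=> /(ler_wpM2l (ltW n_gt0)); rewrite mulVKf ?gt_eqF //; lra.
split; first exact: mean_test_null.
move=> mu sig sig0 close; have [W_le] := dist_ms_le n0 close.
rewrite ler_norml => /andP[st1 st2].
by apply: mean_test_alt => //; nra.
Qed.

Lemma separating_scale_up_test (mu0 mu1 : n.-tuple R) (s a t : R) :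
  (0 < n)%N -> 0 < s -> 0 < a -> a < s -> s + a / 2 < t ->
  separating_test (1/1000) mu0 s a mu1 t (scale_up_test mu0 s a).
Proof.
move=> n0 s0 a0 a_lt_s far; split; first exact: scale_up_test_null.
move=> mu sig sig0 close; have [_] := dist_ms_le n0 close.
by rewrite ler_norml => /andP[st1 _]; apply: scale_up_test_alt => //; lra.
Qed.

Lemma separating_scale_down_test (mu0 mu1 : n.-tuple R) (s a t : R) :
  (0 < n)%N -> 0 < s -> 0 < a -> a < s -> t + a / 2 < s ->
  separating_test (1/1000) mu0 s a mu1 t (scale_down_test mu1 s a).
Proof.
move=> n0 s0 a0 a_lt_s far; split; first exact: scale_down_test_null.
move=> mu sig sig0 close; have [W_le] := dist_ms_le n0 close.
by rewrite ler_norml => /andP[_ st2]; apply: scale_down_test_alt => //; lra.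
Qed.

Lemma exists_separating_quad_test {mu0 mu1 : n.-tuple R} {s a t : R} :
  (0 < n)%N -> 0 < s -> 0 < a -> a < s -> a <= dist_ms mu1 t mu0 s ->
  exists k v c T, separating_test (1/1000) mu0 s a mu1 t (quad_test k v c T).
Proof.
move=> n0 s0 a0 a_lt_s far; have [near_ts | ] := lerP `|t - s| (a / 2).
  by do 4 eexists; exact: separating_mean_test.
rewrite ltr_normr => /orP[st | ts].
  by do 4 eexists; apply: separating_scale_up_test => //; lra.
by do 4 eexists; apply: separating_scale_down_test => //; lra.
Qed.

End tests.

Theorem theorem1 (R : realType) :
  exists K : R, 0 < K /\
  forall (n : nat) (mu0 : n.-tuple R) (sigma0 eps : R) (mu1 : n.-tuple R) (sigma1 : R),
    (1 <= n)%N -> 0 < sigma0 -> 0 < eps -> eps < sigma0 -> 0 < sigma1 ->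
    eps <= dist_ms mu1 sigma1 mu0 sigma0 ->
    exists phi : n.-tuple R -> R,
      measurable_fun [set: n.-tuple R] phi /\
      (forall y, phi y = 0 \/ phi y = 1) /\
      (gauss_expect mu0 sigma0 (fun y => (phi y)%:E)
         <= (expR (- (K * n%:R * eps ^+ 2 / sigma0 ^+ 2)))%:E)%E /\
      (forall (mu : n.-tuple R) (sigma : R), 0 < sigma ->
         dist_ms mu sigma mu1 sigma1 <= eps / 6 ->
         (gauss_expect mu sigma (fun y => (1 - phi y)%:E)
            <= (expR (- (K * n%:R * eps ^+ 2 / sigma0 ^+ 2)))%:E)%E).
Proof.
exists (1/1000); split => [|n mu0 s a mu1 t n0 s0 a0 a_lt_s _ far]; first lra.
have [k [v [c [T sep]]]] := exists_separating_quad_test n0 s0 a0 a_lt_s far.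
exists (quad_test k v c T); split; first exact: measurable_quad_test.
by split; [exact: quad_test01 | exact: sep].
Qed.
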